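(* Let $\mathcal A$ be an $\mathbf{HpsUL}^\ast_\omega$-chain. Let $B\subseteq A$ with $\{e,f,\bot,\top\}\subseteq B$, and let $M$, $D$, $\cdot^D$ be as described in the context. Then for all $X,Y\in D$, $$X\cdot^DY\subseteq (e] \iff (X\cdot^DY)\cdot^DY\subseteq (e],$$ where $(e]=\{c\in M: c\le e\}$.
   Context: An $\mathbf{HpsUL}$-algebra is a structure $\mathcal A=\langle A,\wedge,\vee,\cdot,\backslash,/,e,f,\bot,\top\rangle$ such that: - it is a bounded lattice; - $\langle A,\cdot,e\rangle$ is a monoid; - $xy\le z$ iff $x\le z/y$ iff $y\le x\backslash z$; - for all $x,y,u,v$: $\lambda_u((x\vee y)\backslash x)\vee\rho_v((x\vee y)\backslash y)=e$, where $\lambda_a(b)=(a\backslash(ba))\wedge e$ and $\rho_a(b)=((ab)/a)\wedge e$. An $\mathbf{HpsUL}^\ast_\omega$-chain is a linearly ordered $\mathbf{HpsUL}$-algebra such that $xy\le e$ implies $yx\le e$, and $x\backslash e=x^2\backslash e$ for all $x$. Construction. $M$ is the submonoid of $\langle A,\cdot,e\rangle$ generated by $B$. For $a_1,a_2\in M$ and $b\in B$, put $(a_1^la_2^r)^{-1}(b]=\{c\in M: a_1ca_2\le b\}$. Let $\bar D$ be the set of all such sets. Let $D=\{\bigcap\chi:\chi\subseteq\bar D\}$, with the empty intersection equal to $M$. For $X\subseteq M$, let $C(X)$ be the intersection of all members of $\bar D$ containing $X$. For $X,Y\subseteq M$, let $XY=\{xy:x\in X,y\in Y\}$ and $X\cdot^DY=C(XY)$.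 *)

(* Signature of an HpsUL-algebra: <A, meet, join, mul, \ , /, e, f, bot, top>.
   ldiv x y = x \ y ,  rdiv x y = x / y. *)
Record HpsUL_sig := {
  car :> Type;
  meet : car -> car -> car;
  join : car -> car -> car;
  mul  : car -> car -> car;
  ldiv : car -> car -> car;
  rdiv : car -> car -> car;
  unit_e : car;
  const_f : car;
  bot : car;
  top : car }.

Definition le {A : HpsUL_sig} (x y : A) : Prop := meet A x y = x.

Definition lam {A : HpsUL_sig} (a b : A) : A :=
  meet A (ldiv A a (mul A b a)) (unit_e A).
Definition rho {A : HpsUL_sig} (a b : A) : A :=
  meet A (rdiv A (mul A a b) a) (unit_e A).

Definition is_HpsUL (A : HpsUL_sig) : Prop :=
  (forall x y z : A, meet A x (meet A y z) = meet A (meet A x y) z) /\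
  (forall x y z : A, join A x (join A y z) = join A (join A x y) z) /\
  (forall x y : A, meet A x y = meet A y x) /\
  (forall x y : A, join A x y = join A y x) /\
  (forall x y : A, meet A x (join A x y) = x) /\
  (forall x y : A, join A x (meet A x y) = x) /\
  (forall x : A, le (bot A) x) /\
  (forall x : A, le x (top A)) /\
  (forall x y z : A, mul A x (mul A y z) = mul A (mul A x y) z) /\
  (forall x : A, mul A (unit_e A) x = x) /\
  (forall x : A, mul A x (unit_e A) = x) /\
  (forall x y z : A, le (mul A x y) z <-> le x (rdiv A z y)) /\
  (forall x y z : A, le (mul A x y) z <-> le y (ldiv A x z)) /\
  (forall x y u v : A,
     join A (lam u (ldiv A (join A x y) x)) (rho v (ldiv A (join A x y) y))
     = unit_e A).

Definition is_HpsUL_star_omega_chain (A : HpsUL_sig) : Prop :=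
  is_HpsUL A /\
  (forall x y : A, le x y \/ le y x) /\
  (forall x y : A, le (mul A x y) (unit_e A) -> le (mul A y x) (unit_e A)) /\
  (forall x : A, ldiv A x (unit_e A) = ldiv A (mul A x x) (unit_e A)).

Inductive Mon {A : HpsUL_sig} (B : A -> Prop) : A -> Prop :=
  | Mon_gen : forall b, B b -> Mon B b
  | Mon_e : Mon B (unit_e A)
  | Mon_mul : forall x y, Mon B x -> Mon B y -> Mon B (mul A x y).

(* (a1^l a2^r)^{-1}(b] = { c in M : a1 c a2 <= b } *)
Definition resid_set {A : HpsUL_sig} (B : A -> Prop) (a1 a2 b : A) : A -> Prop :=
  fun c => Mon B c /\ le (mul A (mul A a1 c) a2) b.

(* Dbar: the set of all such sets (a1, a2 in M, b in B); sets are predicates,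
   set equality is extensional. *)
Definition Dbar {A : HpsUL_sig} (B : A -> Prop) (Y : A -> Prop) : Prop :=
  exists a1 a2 b, Mon B a1 /\ Mon B a2 /\ B b /\
    (forall c, Y c <-> resid_set B a1 a2 b c).

(* D = { intersections of subfamilies of Dbar }, empty intersection = M *)
Definition Dsets {A : HpsUL_sig} (B : A -> Prop) (X : A -> Prop) : Prop :=
  exists chi : (A -> Prop) -> Prop,
    (forall Y, chi Y -> Dbar B Y) /\
    (forall c, X c <-> (Mon B c /\ forall Y, chi Y -> Y c)).

Definition Cl {A : HpsUL_sig} (B : A -> Prop) (X : A -> Prop) : A -> Prop :=
  fun c => Mon B c /\
    forall Y, Dbar B Y -> (forall x, X x -> Y x) -> Y c.

Definition setmul {A : HpsUL_sig} (X Y : A -> Prop) : A -> Prop :=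
  fun c => exists x y, X x /\ Y y /\ c = mul A x y.

Definition mulD {A : HpsUL_sig} (B : A -> Prop) (X Y : A -> Prop) : A -> Prop :=
  Cl B (setmul X Y).

Definition down_e {A : HpsUL_sig} (B : A -> Prop) : A -> Prop :=
  fun c => Mon B c /\ le c (unit_e A).

Definition subset {T : Type} (X Y : T -> Prop) : Prop := forall x, X x -> Y x.

(** In an HpsUL*_omega-chain, [z x <= e] iff [z x x <= e]: cyclicity brings
    [x] to the front, where [x \ e = x^2 \ e] squares it.  If [XY <= (e]],
    then for [y] in [Y] the basic closed set [{c : c y <= e}] contains [XY]
    (compare the two factors from [Y] by linearity), hence [C(XY)]; so
    [C(XY) Y <= (e]], and since [(e]] is basic closed, so is the closure.
    Conversely [x y <= e] follows from [x y y <= e], with [x y y] in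
    [C(XY) Y]. *)

From Stdlib Require Import Setoid.

Section ResiduatedLattice.

Variable A : HpsUL_sig.
Hypothesis HA : is_HpsUL A.

Local Notation e := (unit_e A).
Local Notation "x * y" := (mul A x y).

Lemma le_refl (x : A) : le x x.
Proof.
  destruct HA as [_ [_ [_ [_ [absorb_meet [absorb_join _]]]]]].
  unfold le. pose proof (absorb_meet x (meet A x x)) as H.
  rewrite absorb_join in H. exact H.
Qed.

Lemma le_trans (x y z : A) : le x y -> le y z -> le x z.
Proof.
  destruct HA as [meetA _].
  unfold le; intros Hxy Hyz. rewrite <- Hxy, <- meetA, Hyz. reflexivity.
Qed.

Lemma mul_assoc (x y z : A) : x * (y * z) = (x * y) * z.
Proof. destruct HA as [_ [_ [_ [_ [_ [_ [_ [_ [mulA _]]]]]]]]]. apply mulA. Qed.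

Lemma mul_1l (x : A) : e * x = x.
Proof. destruct HA as [_ [_ [_ [_ [_ [_ [_ [_ [_ [mul1x _]]]]]]]]]]. apply mul1x. Qed.

Lemma mul_1r (x : A) : x * e = x.
Proof. destruct HA as [_ [_ [_ [_ [_ [_ [_ [_ [_ [_ [mulx1 _]]]]]]]]]]]. apply mulx1. Qed.

Lemma le_mul_rdiv (x y z : A) : le (x * y) z <-> le x (rdiv A z y).
Proof. destruct HA as [_ [_ [_ [_ [_ [_ [_ [_ [_ [_ [_ [res _]]]]]]]]]]]]. apply res. Qed.

Lemma le_mul_ldiv (x y z : A) : le (x * y) z <-> le y (ldiv A x z).
Proof. destruct HA as [_ [_ [_ [_ [_ [_ [_ [_ [_ [_ [_ [_ [res _]]]]]]]]]]]]]. apply res. Qed.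

Lemma mul_le_monor (x y z : A) : le x y -> le (x * z) (y * z).
Proof.
  intro Hxy. apply le_mul_rdiv. apply le_trans with y; [exact Hxy |].
  apply le_mul_rdiv, le_refl.
Qed.

Lemma mul_le_monol (x y z : A) : le x y -> le (z * x) (z * y).
Proof.
  intro Hxy. apply le_mul_ldiv. apply le_trans with y; [exact Hxy |].
  apply le_mul_ldiv, le_refl.
Qed.

End ResiduatedLattice.

Section OmegaChain.

Variable A : HpsUL_sig.
Hypothesis HA : is_HpsUL_star_omega_chain A.

Local Notation e := (unit_e A).
Local Notation "x * y" := (mul A x y).

Let HL : is_HpsUL A := proj1 HA.

Lemma mul_le_e_cyclic (x y : A) : le (x * y) e -> le (y * x) e.
Proof. apply (proj1 (proj2 (proj2 HA))). Qed.

Lemma mul_le_e_sqrl (x w : A) : le (x * w) e <-> le ((x * x) * w) e.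
Proof.
  rewrite !le_mul_ldiv by exact HL.
  rewrite (proj2 (proj2 (proj2 HA)) x). reflexivity.
Qed.

Lemma mul_le_e_sqrr (z x : A) : le (z * x) e <-> le ((z * x) * x) e.
Proof.
  split; intro H.
  - apply (mul_le_e_cyclic x). rewrite mul_assoc by exact HL.
    apply (mul_le_e_cyclic x). rewrite mul_assoc by exact HL.
    apply (proj1 (mul_le_e_sqrl x z)), mul_le_e_cyclic, H.
  - apply (mul_le_e_cyclic x). apply (proj2 (mul_le_e_sqrl x z)).
    rewrite <- mul_assoc by exact HL. apply (mul_le_e_cyclic (x * z)).
    rewrite <- mul_assoc by exact HL. apply (mul_le_e_cyclic (z * x)). exact H.
Qed.

(* The larger of [y1], [y2] dominates; squaring it stays below [e]. *)
Lemma mul_le_e_pair (x y1 y2 : A) :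
  le (x * y1) e -> le (x * y2) e -> le ((x * y1) * y2) e.
Proof.
  intros H1 H2.
  destruct (proj1 (proj2 HA) y1 y2) as [Hle | Hle].
  - apply le_trans with ((x * y2) * y2); [exact HL | |].
    + apply mul_le_monor, mul_le_monol; assumption.
    + apply (proj1 (mul_le_e_sqrr x y2)), H2.
  - apply le_trans with ((x * y1) * y1); [exact HL | |].
    + apply mul_le_monol; assumption.
    + apply (proj1 (mul_le_e_sqrr x y1)), H1.
Qed.

End OmegaChain.

Section Closure.

Variable A : HpsUL_sig.
Variable B : A -> Prop.

Local Notation e := (unit_e A).
Local Notation M := (Mon B).

Lemma Dsets_sub_Mon (X : A -> Prop) : Dsets B X -> subset X M.
Proof. intros [chi [_ HX]] c Hc. exact (proj1 (proj1 (HX c) Hc)). Qed.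

Lemma setmul_sub_Mon (X Y : A -> Prop) :
  subset X M -> subset Y M -> subset (setmul X Y) M.
Proof. intros HX HY c [x [y [Hx [Hy ->]]]]. apply Mon_mul; auto. Qed.

Lemma Cl_sub_Mon (S : A -> Prop) : subset (Cl B S) M.
Proof. intros c [Hc _]. exact Hc. Qed.

Lemma sub_Cl (S : A -> Prop) : subset S M -> subset S (Cl B S).
Proof. intros HS c Hc. split; [auto |]. intros Y _ HSY. auto. Qed.

Lemma Cl_min (S Y : A -> Prop) : Dbar B Y -> subset S Y -> subset (Cl B S) Y.
Proof. intros HY HSY c [_ Hc]. exact (Hc Y HY HSY). Qed.

Lemma Dbar_resid_set (a1 a2 b : A) :
  M a1 -> M a2 -> B b -> Dbar B (resid_set B a1 a2 b).
Proof. intros. exists a1, a2, b. do 3 (split; [assumption |]). reflexivity. Qed.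

Section UnitInB.

Hypothesis HL : is_HpsUL A.
Hypothesis He : B e.

Lemma Cl_sub_down_e (S : A -> Prop) :
  subset S (down_e B) -> subset (Cl B S) (down_e B).
Proof.
  intros HS c Hc.
  assert (Hres : resid_set B e e e c).
  { revert c Hc. apply Cl_min; [apply Dbar_resid_set; auto using Mon_e |].
    intros x Hx. destruct (HS x Hx) as [HMx Hxe].
    split; [exact HMx |]. rewrite mul_1l, mul_1r by exact HL. exact Hxe. }
  destruct Hres as [HMc Hce]. rewrite mul_1l, mul_1r in Hce by exact HL.
  split; assumption.
Qed.

Lemma Cl_sub_resid_right (S : A -> Prop) (y : A) :
  subset S M -> M y -> (forall x, S x -> le (mul A x y) e) ->
  forall c, Cl B S c -> le (mul A c y) e.
Proof.
  intros HSM Hy HS c Hc.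
  assert (Hres : resid_set B e y e c).
  { revert c Hc. apply Cl_min; [apply Dbar_resid_set; auto using Mon_e |].
    intros x Hx. split; [auto |].
    rewrite mul_1l by exact HL. apply HS, Hx. }
  destruct Hres as [_ Hce]. rewrite mul_1l in Hce by exact HL. exact Hce.
Qed.

End UnitInB.

End Closure.

Section ProductClosure.

Variable A : HpsUL_sig.
Hypothesis HA : is_HpsUL_star_omega_chain A.
Variable B : A -> Prop.
Hypothesis He : B (unit_e A).
Variables X Y : A -> Prop.
Hypothesis HXM : subset X (Mon B).
Hypothesis HYM : subset Y (Mon B).

Let HL : is_HpsUL A := proj1 HA.

Lemma mulD_mulD_sub_down_e :
  subset (mulD B X Y) (down_e B) -> subset (mulD B (mulD B X Y) Y) (down_e B).
Proof.
  intros HXY. apply Cl_sub_down_e; [exact HL | exact He |].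
  intros w [c [y [Hc [Hy ->]]]].
  split; [apply Mon_mul; [exact (Cl_sub_Mon _ _ _ _ Hc) | auto] |].
  apply (Cl_sub_resid_right _ _ HL He (setmul X Y)); auto using setmul_sub_Mon.
  intros v [x [y1 [Hx [Hy1 ->]]]].
  assert (Hle : forall y', Y y' -> le (mul A x y') (unit_e A)).
  { intros y' Hy'. apply HXY, sub_Cl; [apply setmul_sub_Mon; auto |].
    exists x, y'. auto. }
  apply mul_le_e_pair; auto.
Qed.

Lemma mulD_sub_down_e :
  subset (mulD B (mulD B X Y) Y) (down_e B) -> subset (mulD B X Y) (down_e B).
Proof.
  intros HXYY. apply Cl_sub_down_e; [exact HL | exact He |].
  intros w [x [y [Hx [Hy ->]]]].
  assert (Hxy : mulD B X Y (mul A x y)).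
  { apply sub_Cl; [apply setmul_sub_Mon; auto |]. exists x, y. auto. }
  assert (Hxyy : down_e B (mul A (mul A x y) y)).
  { apply HXYY, sub_Cl.
    - apply setmul_sub_Mon; [apply Cl_sub_Mon | exact HYM].
    - exists (mul A x y), y. auto. }
  split; [apply Mon_mul; auto |].
  apply (proj2 (mul_le_e_sqrr _ HA x y)), Hxyy.
Qed.

End ProductClosure.

Theorem lemma3p7 (A : HpsUL_sig) (HA : is_HpsUL_star_omega_chain A)
  (B : A -> Prop)
  (He : B (unit_e A)) (Hf : B (const_f A)) (Hbot : B (bot A)) (Htop : B (top A)) :
  forall X Y : A -> Prop, Dsets B X -> Dsets B Y ->
    (subset (mulD B X Y) (down_e B) <->
     subset (mulD B (mulD B X Y) Y) (down_e B)).
Proof.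
  intros X Y HX HY.
  apply Dsets_sub_Mon in HX. apply Dsets_sub_Mon in HY.
  split.
  - apply mulD_mulD_sub_down_e; assumption.
  - apply mulD_sub_down_e; assumption.
Qed.
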